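(* Let $Q = R_0(u_0)\leftarrow A_1\wedge\cdots\wedge A_m$ be a conjunctive query with $var(Q)=\{X_1,\ldots,X_k\}$ and an arbitrary set of functional dependencies, with $Q=chase(Q)$. Then the color number $C(Q)$ equals the optimal value of the linear program in the real variables $h(S)$, $S\subseteq[k]$ (with $h(\emptyset)=0$): \begin{align*} \text{maximize } \quad & h(u_0)\\ \text{subject to } \quad & h(u_i)\le 1 \quad \text{for all } i=1,\ldots,m,\\ & h(\{t\}\mid\{i_1,\ldots,i_j\})=0 \quad \text{for each induced dependency } X_{i_1},\ldots,X_{i_j}\to X_t,\\ & I(S\mid [k]\setminus S)\ge 0 \quad \text{for every nonempty } S\subseteq[k]. \end{align*}
   Context: A conjunctive query has the form $Q = R_0(u_0)\leftarrow A_1\wedge\cdots\wedge A_m$, where each body atom is $A_i=R_{j(i)}(u_i)$ for a relation name $R_{j(i)}$ (a relation name may occur in several atoms), each $u_i$ is a list of variables of length equal to the arity of $R_{j(i)}$, and every head variable occurs in the body. A functional dependency $V\to a$ on relation $R$ ($V$ a set of attribute positions, $a$ a position) induces, for each body atom $R(u)$, the dependency $\{u[p]:p\in V\}\to u[a]$ among query variables (''induced dependency''). $Q=chase(Q)$ means: no atom repeated, and for every relation $R$, FD $V\to a$ on $R$, and atoms $R(u),R(u')$, if $u[p]=u'[p]$ for all $p\in V$ then $u[a]=u'[a]$. Valid coloring: a map $\mathcal{L}$ assigning to each $X\in var(Q)$ a finite set $\mathcal{L}(X)$ of colors such that for every induced dependency $X_1,\ldots,X_j\to Y$, $\mathcal{L}(Y)\subseteq\bigcup_i\mathcal{L}(X_i)$.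 Color number: $C(Q)=\max_{\mathcal{L}} \frac{|\bigcup_{X\in u_0}\mathcal{L}(X)|}{\max_{i\ge1}|\bigcup_{X\in u_i}\mathcal{L}(X)|}$, the maximum over valid colorings with positive denominator. Linear-program notation: for a variable list $u$, $h(u)=h(S_u)$ with $S_u$ the set of indices of variables in $u$. For $A,B\subseteq[k]$, $h(A\mid B):=h(A\cup B)-h(B)$. For nonempty $T\subseteq[k]$ and $T'\subseteq[k]$ disjoint from $T$, the (multivariate conditional) mutual information is $I(T\mid T'):=\sum_{\emptyset\ne A\subseteq T}(-1)^{|A|+1}h(A\mid T')$ (so $I(\{i\}\mid T')=h(\{i\}\mid T')$ and $I(\{i,j\}\mid T')=h(\{i\}\cup T')+h(\{j\}\cup T')-h(T')-h(\{i,j\}\cup T')$); this matches the recursive definition $I(X_1;\ldots;X_n)=I(X_1;\ldots;X_{n-1})-I(X_1;\ldots;X_{n-1}\mid X_n)$. *)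

From HB Require Import structures.
From mathcomp Require Import all_boot all_order all_algebra.
Set Implicit Arguments. Unset Strict Implicit. Unset Printing Implicit Defensive.
Import Order.TTheory GRing.Theory Num.Theory.

(* Query variables are X_0..X_{k-1}, i.e. elements of 'I_k.
   A body atom is a pair (r, u): relation name r : nat and argument list u.
   fds r : seq (seq nat * nat) lists the FDs V -> a on relation r
   (positions are 0-based).  The head is the argument list u_0. *)

Section Q.
Variable k : nat.
Notation V := 'I_k.

Definition vset (u : seq V) : {set V} := [set x | x \in u].

Definition induced (fds : nat -> seq (seq nat * nat)) (body : seq (nat * seq V))
  (S : {set V}) (y : V) : Prop :=
  exists2 ru, ru \in body &
  exists2 Wa, Wa \in fds ru.1 &
    onth ru.2 Wa.2 = Some y /\ S = [set x | Some x \in map (onth ru.2) Wa.1].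

(* Q = chase(Q) *)
Definition chased (fds : nat -> seq (seq nat * nat)) (body : seq (nat * seq V)) : Prop :=
  uniq body /\
  forall r (u u' : seq V) (Wa : seq nat * nat),
    Wa \in fds r -> (r, u) \in body -> (r, u') \in body ->
    (forall p, p \in Wa.1 -> onth u p = onth u' p) ->
    onth u Wa.2 = onth u' Wa.2.

Definition valid_coloring (fds : nat -> seq (seq nat * nat)) (body : seq (nat * seq V))
  (n : nat) (L : V -> {set 'I_n}) : Prop :=
  forall S y, induced fds body S y -> L y \subset \bigcup_(x in S) L x.

Definition colors_of n (L : V -> {set 'I_n}) (u : seq V) : {set 'I_n} :=
  \bigcup_(x <- u) L x.

Definition col_num n (L : V -> {set 'I_n}) (head : seq V) : nat :=
  #|colors_of L head|.

Definition col_den n (L : V -> {set 'I_n}) (body : seq (nat * seq V)) : nat :=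
  \max_(ru <- body) #|colors_of L ru.2|.

Local Open Scope ring_scope.
Variable R : realFieldType.

Definition hcond (h : {set V} -> R) (A B : {set V}) : R := h (A :|: B) - h B.

Definition mutinf (h : {set V} -> R) (T T' : {set V}) : R :=
  \sum_(A in powerset T | A != set0) (-1) ^+ (#|A|.+1) * hcond h A T'.

Definition lp_feasible (fds : nat -> seq (seq nat * nat)) (body : seq (nat * seq V))
  (h : {set V} -> R) : Prop :=
  [/\ h set0 = 0,
      (forall ru, ru \in body -> h (vset ru.2) <= 1),
      (forall S y, induced fds body S y -> hcond h [set y] S = 0) &
      (forall S : {set V}, S != set0 -> 0 <= mutinf h S (~: S))].

Definition lp_optimum fds body (head : seq V) (c : R) : Prop :=
  (exists2 h, lp_feasible fds body h & h (vset head) = c) /\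
  (forall h, lp_feasible fds body h -> h (vset head) <= c).

Definition color_ratio n (L : V -> {set 'I_n}) head body : R :=
  (col_num L head)%:R / (col_den L body)%:R.

Definition is_color_number fds body (head : seq V) (c : R) : Prop :=
  (exists n (L : V -> {set 'I_n}),
      [/\ valid_coloring fds body L, (0 < col_den L body)%N & color_ratio L head body = c]) /\
  (forall n (L : V -> {set 'I_n}), valid_coloring fds body L -> (0 < col_den L body)%N ->
      color_ratio L head body <= c).
End Q.

From HB Require Import structures.
From mathcomp Require Import all_boot all_order all_algebra.
Set Implicit Arguments. Unset Strict Implicit. Unset Printing Implicit Defensive.
Import Order.TTheory GRing.Theory Num.Theory.
Local Open Scope ring_scope.

(* The proof changes coordinates.  A set function h on the subsets of [k] with
   h(set0) = 0 is the same thing as a weight function w on subsets, via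
     h(A) = sum of w(T) over the sets T meeting A,   w(S) = I(S | ~: S)
   (Moebius inversion, Section MobiusInversion).  In weight coordinates the LP
   reads: w >= 0, w vanishes on non-admissible sets (sets T containing the
   conclusion y of an induced dependency S -> y but no premise in S), every atom
   has total weight <= 1; maximize the weight meeting the head.
   - A valid coloring gives feasible weights (the proportion of colors whose set of
     variables is T), whose objective is its color ratio: C(Q) <= LP value.
   - Fourier-Motzkin elimination (Section FourierMotzkin) shows that the weight LP
     has a rational optimum c, optimal over every real field.  An optimal rational
     w, scaled to integers, is the multiplicity vector of a coloring whose color
     ratio is at least c: so C(Q) = c. *)

(* A rational linear constraint  a_0 x_0 + ... + a_(n-1) x_(n-1) <= b,
   stored as its coefficient list a and its bound b. *)
Definition constr := (seq rat * rat)%type.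

Definition fm_comb (n : nat) (p q : constr) : constr :=
  ([seq p.1`_i / p.1`_n - q.1`_i / q.1`_n | i <- iota 0 n],
   p.2 / p.1`_n - q.2 / q.1`_n).

Definition fm_elim (n : nat) (cs : seq constr) : seq constr :=
  [seq c <- cs | c.1`_n == 0] ++
  [seq fm_comb n p q | p <- [seq c <- cs | 0 < c.1`_n], q <- [seq c <- cs | c.1`_n < 0]].

Fixpoint fm_proj (m n : nat) (cs : seq constr) : seq constr :=
  if m is m'.+1 then fm_proj m' n (fm_elim (n + m') cs) else cs.

Section FourierMotzkin.
Variable F : realFieldType.

Definition lhs (n : nat) (c : constr) (x : nat -> F) : F := \sum_(i < n) ratr c.1`_i * x i.
Definition sat (n : nat) (x : nat -> F) (c : constr) : bool := lhs n c x <= ratr c.2.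
Definition upd (x : nat -> F) (n : nat) (y : F) : nat -> F := fun i => if i == n then y else x i.

Lemma lhs_ext n c x y : (forall i, (i < n)%N -> x i = y i) -> lhs n c x = lhs n c y.
Proof. by move=> exy; apply: eq_bigr => i _; rewrite exy. Qed.

Lemma lhs_upd n c x y : lhs n.+1 c (upd x n y) = lhs n c x + ratr c.1`_n * y.
Proof.
rewrite /lhs big_ord_recr /= /upd eqxx; congr (_ + _).
by apply: eq_bigr => i _; rewrite ltn_eqF.
Qed.

Lemma lhs_comb n p q x :
  lhs n (fm_comb n p q) x = lhs n p x / ratr p.1`_n - lhs n q x / ratr q.1`_n.
Proof.
rewrite /lhs !mulr_suml -sumrB; apply: eq_bigr => i _.
rewrite (nth_map 0%N) ?size_iota // nth_iota // add0n.
by rewrite rmorphB !fmorph_div /= mulrBl (mulrAC (ratr p.1`_i)) (mulrAC (ratr q.1`_i)).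
Qed.

Lemma separating_point (ls us : seq F) :
  (forall l u, l \in ls -> u \in us -> l <= u) ->
  exists y, (forall l, l \in ls -> l <= y) /\ (forall u, u \in us -> y <= u).
Proof.
elim: ls => [|l ls IH] lsus.
  elim: us {lsus} => [|u us [y [_ yus]]]; first by exists 0.
  exists (Num.min u y); split => // v; rewrite inE => /orP[/eqP->|/yus vy].
    by rewrite ge_min lexx.
  by rewrite ge_min vy orbT.
have [y [lsy yus]] : exists y, (forall l, l \in ls -> l <= y) /\ (forall u, u \in us -> y <= u).
  by apply: IH => l' u l'ls uus; apply: lsus => //; rewrite inE l'ls orbT.
exists (Num.max l y); split.
  move=> l'; rewrite inE => /orP[/eqP->|/lsy l'y]; first by rewrite le_max lexx.
  by rewrite le_max l'y orbT.
by move=> u uus; rewrite ge_max yus // andbT; apply: lsus => //; rewrite inE eqxx.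
Qed.

Lemma le_pos_coef (l a y b : F) : 0 < a -> (l + a * y <= b) = (y <= (b - l) / a).
Proof. by move=> a_gt0; rewrite ler_pdivlMr // mulrC lerBrDl. Qed.

Lemma le_neg_coef (l a y b : F) : a < 0 -> (l + a * y <= b) = ((b - l) / a <= y).
Proof. by move=> a_lt0; rewrite ler_ndivrMr // mulrC lerBrDl. Qed.

Lemma le_sub_swap (a b c d : F) : (a - b <= c - d) = (d - b <= c - a).
Proof. by rewrite !lerBrDr addrAC [d - b + a]addrAC (addrC a d). Qed.

Lemma fm_elimP n cs x :
  all (sat n x) (fm_elim n cs) <-> exists y, all (sat n.+1 (upd x n y)) cs.
Proof.
(* the bound on x_n imposed by c, read as an upper or lower bound after division *)
pose bnd (c : constr) := (ratr c.2 - lhs n c x) / ratr c.1`_n.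
have combE p q : sat n x (fm_comb n p q) = (bnd q <= bnd p).
  by rewrite /sat lhs_comb /bnd /= rmorphB !fmorph_div /= !mulrBl le_sub_swap.
have satE y c : sat n.+1 (upd x n y) c = (lhs n c x + ratr c.1`_n * y <= ratr c.2).
  by rewrite /sat lhs_upd.
split.
- move=> /allP sat_elim.
  have [y [lowy yup]] : exists y,
      (forall l, l \in map bnd [seq c <- cs | c.1`_n < 0] -> l <= y) /\
      (forall u, u \in map bnd [seq c <- cs | 0 < c.1`_n] -> y <= u).
    apply: separating_point => l u /mapP[q qcs ->] /mapP[p pcs ->]; rewrite -combE.
    by apply: sat_elim; rewrite mem_cat; apply/orP; right; apply: allpairs_f.
  exists y; apply/allP => c ccs; rewrite satE.
  case: (ltrgtP c.1`_n 0) => cn.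
  + by rewrite le_neg_coef ?ltrq0 //; apply: lowy; apply/map_f; rewrite mem_filter cn ccs.
  + by rewrite le_pos_coef ?ltr0q //; apply: yup; apply/map_f; rewrite mem_filter cn ccs.
  + rewrite cn rmorph0 mul0r addr0.
    by apply: (sat_elim c); rewrite mem_cat mem_filter cn eqxx ccs.
- move=> [y /allP satcs]; apply/allP => c; rewrite mem_cat => /orP[|].
  + rewrite mem_filter => /andP[/eqP cn0 ccs]; have := satcs c ccs.
    by rewrite satE cn0 rmorph0 mul0r addr0.
  + move=> /allpairsP[[p q] [/= pcs qcs ->]]; rewrite combE.
    move: pcs qcs; rewrite !mem_filter => /andP[pn pcs] /andP[qn qcs].
    apply: (@le_trans _ _ y).
    * by rewrite /bnd -le_neg_coef ?ltrq0 // -satE satcs.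
    * by rewrite /bnd -le_pos_coef ?ltr0q // -satE satcs.
Qed.

Lemma fm_projP m n cs x :
  all (sat n x) (fm_proj m n cs) <->
  exists x', (forall i, (i < n)%N -> x' i = x i) /\ all (sat (n + m) x') cs.
Proof.
elim: m cs => [|m IH] cs /=.
  rewrite addn0; split; first by move=> satx; exists x.
  move=> [x' [x'x /allP satx']]; apply/allP => c ccs; have := satx' c ccs.
  by rewrite /sat (@lhs_ext n c x' x).
rewrite addnS; split.
- move=> /IH [x' [x'x /fm_elimP [y saty]]]; exists (upd x' (n + m) y); split => //.
  by move=> i lt_in; rewrite /upd ltn_eqF ?x'x // (leq_trans lt_in) ?leq_addr.
- move=> [x' [x'x satx']]; apply/IH; exists x'; split => //.
  apply/fm_elimP; exists (x' (n + m)); apply/allP => c ccs; move/allP: satx' => /(_ c ccs).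
  rewrite /sat (@lhs_ext _ c (upd x' (n + m) (x' (n + m))) x') // => i _.
  by rewrite /upd; case: eqP => [->|].
Qed.

Lemma sat1 (t : F) c : sat 1 (fun _ => t) c = (ratr c.1`_0 * t <= ratr c.2).
Proof. by rewrite /sat /lhs big_ord1. Qed.

End FourierMotzkin.

Lemma ratr_id (q : rat) : ratr q = q.
Proof. by rewrite /ratr divq_num_den. Qed.

Lemma exists_argmin (T : eqType) d (O : orderType d) (s : seq T) (f : T -> O) :
  s != [::] -> exists2 y, y \in s & forall z, z \in s -> (f y <= f z)%O.
Proof.
elim: s => [//|a s IH] _.
case: (eqVneq s [::]) => [->|s_neq0].
  by exists a; rewrite ?mem_head // => z; rewrite inE => /eqP->.
have [y ys ymin] := IH s_neq0.
case: (leP (f a) (f y)) => fay.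
  exists a; first exact: mem_head.
  by move=> z; rewrite inE => /orP[/eqP->//|/ymin]; apply: le_trans.
exists y; first by rewrite inE ys orbT.
by move=> z; rewrite inE => /orP[/eqP->|/ymin//]; apply: ltW.
Qed.

Lemma fm_max1 (P : seq constr) (M : rat) :
  all (sat 1 (fun _ => 0 : rat)) P -> 0 <= M -> ~~ all (sat 1 (fun _ => M)) P ->
  exists c : rat, [/\ 0 <= c, all (sat 1 (fun _ => c)) P &
    forall (F : realFieldType) (t : F), all (sat 1 (fun _ => t)) P -> t <= ratr c].
Proof.
move=> /allP sat0 M_ge0 unsatM.
have bnd_ge0 c : c \in P -> 0 <= c.2.
  by move=> cP; have := sat0 c cP; rewrite sat1 mulr0 ratr_id.
have [c0 c0P c0min] : exists2 c0, c0 \in [seq c <- P | 0 < c.1`_0] &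
    forall c, c \in [seq c <- P | 0 < c.1`_0] -> c0.2 / c0.1`_0 <= c.2 / c.1`_0.
  apply: exists_argmin; apply: contraNneq unsatM => no_pos; apply/allP => c cP.
  have cn_le0 : c.1`_0 <= 0.
    rewrite leNgt; apply/negP => cn.
    by have := mem_filter (fun c => 0 < c.1`_0) c P; rewrite no_pos cn cP.
  by rewrite sat1 !ratr_id (le_trans _ (bnd_ge0 c cP)) // mulr_le0_ge0.
move: c0P; rewrite mem_filter => /andP[c0n c0P].
exists (c0.2 / c0.1`_0); split.
- by rewrite divr_ge0 ?bnd_ge0 // ltW.
- apply/allP => c cP; rewrite sat1 !ratr_id.
  case: (ltrP 0 c.1`_0) => cn.
    by rewrite mulrC -ler_pdivlMr //; apply: c0min; rewrite mem_filter cn cP.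
  by rewrite (le_trans _ (bnd_ge0 c cP)) // mulr_le0_ge0 // divr_ge0 ?bnd_ge0 // ltW.
- move=> F t /allP /(_ c0 c0P); rewrite sat1 fmorph_div /= => sat_t.
  by rewrite ler_pdivlMr ?ltr0q // mulrC.
Qed.

Section MeetsAndAlternatingSums.
Variable T : finType.
Implicit Types A B C D Y Z : {set T}.

Definition meets A B : bool := A :&: B != set0.

Lemma meetsP A B : reflect (exists2 x, x \in A & x \in B) (meets A B).
Proof.
apply: (iffP (@set0Pn _ (A :&: B))) => [[x]|[x xA xB]].
  by rewrite inE => /andP[]; exists x.
by exists x; rewrite inE xA.
Qed.

Lemma meetsU A B C : meets A (B :|: C) = meets A B || meets A C.
Proof. by rewrite /meets setIUr setU_eq0 negb_and. Qed.

Lemma meetsC A B : meets A B = meets B A.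
Proof. by rewrite /meets setIC. Qed.

Lemma meets0 A : meets A set0 = false.
Proof. by rewrite /meets setI0 eqxx. Qed.

Lemma meets1 A y : meets A [set y] = (y \in A).
Proof.
apply/meetsP/idP => [[x xA]|yA]; first by rewrite inE => /eqP <-.
by exists y; rewrite ?set11.
Qed.

Lemma nmeets_sub A B : (~~ meets A B) = (A \subset ~: B).
Proof. by rewrite negbK setI_eq0 disjoints_subset. Qed.

Lemma meets_compl A B : meets A (~: B) = ~~ (A \subset B).
Proof. by rewrite -{2}[B]setCK -nmeets_sub negbK. Qed.

Lemma alt_sum_powerset (R : nzRingType) D :
  \sum_(Y in powerset D) (-1) ^+ #|Y| = (D == set0)%:R :> R.
Proof.
case: (set_0Vmem D) => [->|[a aD]].
  by rewrite powerset0 big_set1 cards0 expr0 eqxx.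
have -> : (D == set0) = false by apply/eqP => D0; move: aD; rewrite D0 inE.
(* pair each Y not containing a with a |: Y *)
rewrite (bigID (fun X : {set T} => a \in X)) /=.
rewrite (reindex_onto (fun Y : {set T} => a |: Y) (fun X : {set T} => X :\ a)) /=; last first.
  by move=> X /andP[_ aX]; rewrite setD1K.
rewrite (eq_big (fun Y : {set T} => (Y \in powerset D) && (a \notin Y))
                (fun Y : {set T} => - (-1) ^+ #|Y|)).
- by rewrite sumrN addNr.
- move=> Y; rewrite !powersetE setU11 andbT.
  apply/andP/andP => [[YD /eqP Ya]|[YD aY]].
    have aY : a \notin Y by rewrite -Ya !inE eqxx.
    by split => //; apply: subset_trans YD; apply: subsetUr.
  by rewrite setU1K // eqxx; split => //; rewrite subUset sub1set aD.
- move=> Y /andP[_ /eqP Ya].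
  have aY : a \notin Y by rewrite -Ya !inE eqxx.
  by rewrite cardsU1 aY exprS mulN1r.
Qed.

(* Restricting to the subsets of D avoiding E leaves the alternating sum over D :\: E. *)
Lemma alt_sum_avoiding (R : nzRingType) D E :
  \sum_(Y in powerset D | ~~ meets Y E) (-1) ^+ #|Y| = (D \subset E)%:R :> R.
Proof.
rewrite -setD_eq0 -alt_sum_powerset; apply: eq_bigl => Y.
by rewrite !powersetE nmeets_sub subsetD disjoints_subset.
Qed.

Lemma sum_supersets_compl (R : nzRingType) D (P : pred {set T}) (F : {set T} -> R) :
  \sum_(Z : {set T} | (~: D \subset Z) && P Z) F Z =
  \sum_(Y : {set T} | (Y \subset D) && P (Y :|: ~: D)) F (Y :|: ~: D).
Proof.
rewrite (reindex_onto (fun Y : {set T} => Y :|: ~: D) (fun Z : {set T} => Z :&: D)) /=.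
  apply: eq_bigl => Y; rewrite subsetUr /= setIUl (setIC (~: D)) setICr setU0 andbC.
  congr (_ && _); apply/eqP/idP => [<-|/setIidPl //]; exact: subsetIr.
move=> Z /andP[DZ _]; apply/setP => x; rewrite !inE.
case: (boolP (x \in D)) => xD; rewrite ?andbT ?andbF /= ?orbF //.
by rewrite (subsetP DZ) // inE xD.
Qed.

Lemma sum_nonempty_subsets (R : nzRingType) (F : {set T} -> R) S :
  F set0 = 0 -> \sum_(B in powerset S | B != set0) F B = \sum_(B in powerset S) F B.
Proof. by move=> F0; rewrite [RHS](bigD1 set0) ?powersetE ?sub0set //= F0 add0r. Qed.

Lemma sum_split_pred (R : nzRingType) (I : finType) (P Q : pred I) (F : I -> R) :
  \sum_(i | P i && Q i) F i = \sum_(i | P i) F i - \sum_(i | P i && ~~ Q i) F i.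
Proof. by rewrite [X in _ = X - _](bigID Q P) addrK. Qed.

Lemma alt_sum_meets (R : nzRingType) S Z : S != set0 ->
  \sum_(B in powerset S) (-1) ^+ #|B|.+1 * (meets Z B)%:R = (S \subset Z)%:R :> R.
Proof.
move=> S_neq0.
have -> : \sum_(B in powerset S) (-1) ^+ #|B|.+1 * (meets Z B)%:R =
    \sum_(B in powerset S) (-1) ^+ #|B|.+1
      - \sum_(B in powerset S | ~~ meets B Z) (-1) ^+ #|B|.+1 :> R.
  rewrite [X in _ = _ - X]big_mkcondr -sumrB; apply: eq_bigr => B _.
  by rewrite meetsC; case: (meets B Z); rewrite /= ?mulr1 ?mulr0 ?subr0 ?subrr.
under eq_bigr => B _ do rewrite exprS mulN1r.
under [X in _ - X]eq_bigr => B _ do rewrite exprS mulN1r.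
by rewrite !sumrN alt_sum_powerset alt_sum_avoiding (negbTE S_neq0) oppr0 sub0r opprK.
Qed.

Lemma alt_sum_cosupersets (R : nzRingType) Z A :
  \sum_(S : {set T} | meets S A && (~: S \subset Z)) - (-1) ^+ #|Z :&: S|
    = (Z == A)%:R - (Z == set0)%:R :> R.
Proof.
rewrite (eq_bigl (fun S : {set T} => (~: Z \subset S) && meets S A)); last first.
  by move=> S; rewrite andbC -{1}[Z]setCK setCS.
rewrite (sum_supersets_compl Z (fun S => meets S A)).
rewrite (eq_bigr (fun Y : {set T} => - (-1) ^+ #|Y|)); last first.
  by move=> Y /andP[YZ _]; rewrite setIUr setICr setU0 (setIidPr YZ).
rewrite (eq_bigl (fun Y : {set T} => (Y \in powerset Z) && meets (Y :|: ~: Z) A)); last first.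
  by move=> Y; rewrite powersetE.
rewrite (sum_split_pred (fun Y => Y \in powerset Z)) sumrN alt_sum_powerset.
case: (boolP (A \subset Z)) => AZ.
  rewrite (eq_bigl (fun Y : {set T} => (Y \in powerset Z) && ~~ meets Y A)); last first.
    by move=> Y; rewrite meetsC meetsU meets_compl AZ orbF meetsC.
  by rewrite sumrN alt_sum_avoiding opprK addrC (eqEsubset Z A) AZ andbT.
rewrite big_pred0; last by move=> Y; rewrite meetsC meetsU meets_compl AZ orbT andbF.
rewrite subr0; suff -> : (Z == A) = false by rewrite sub0r.
by apply/eqP => ZA; move: AZ; rewrite ZA subxx.
Qed.

End MeetsAndAlternatingSums.

Section MobiusInversion.
Variables (k : nat) (R : realFieldType).
Local Notation V := 'I_k.

Definition wsum (w : {set V} -> R) (A : {set V}) : R := \sum_(T : {set V} | meets T A) w T.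

Lemma wsum0 (w : {set V} -> R) : wsum w set0 = 0.
Proof. by rewrite /wsum big_pred0 // => T; rewrite meets0. Qed.

Lemma wsum_ext (w w' : {set V} -> R) A : w =1 w' -> wsum w A = wsum w' A.
Proof. by move=> ww'; apply: eq_bigr => S _; rewrite ww'. Qed.

Lemma hcond_wsum (w : {set V} -> R) A B :
  hcond (wsum w) A B = \sum_(T : {set V} | meets T A && ~~ meets T B) w T.
Proof.
rewrite /hcond /wsum (bigID (fun T => meets T B)) /=.
rewrite (eq_bigl (fun T => meets T B)); last first.
  by move=> T; rewrite meetsU; case: (meets T B); rewrite ?orbT ?andbF.
rewrite addrC addrK; apply: eq_bigl => T; rewrite meetsU.
by case: (meets T B); rewrite ?orbT ?orbF ?andbF ?andbT.
Qed.

Lemma hcond_wsum_compl (w : {set V} -> R) (B S : {set V}) :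
  hcond (wsum w) B (~: S) = \sum_(T : {set V} | T \subset S) w T * (meets T B)%:R.
Proof.
rewrite hcond_wsum big_mkcond [RHS]big_mkcond; apply: eq_bigr => T _.
rewrite meets_compl negbK; case: (T \subset S); rewrite /= ?andbF //.
by case: (meets T B); rewrite ?mulr1 ?mulr0.
Qed.

Lemma mutinf_wsum (w : {set V} -> R) (S : {set V}) :
  S != set0 -> mutinf (wsum w) S (~: S) = w S.
Proof.
move=> S_neq0; rewrite /mutinf sum_nonempty_subsets; last first.
  by rewrite /hcond set0U subrr mulr0.
under eq_bigr => B _ do rewrite hcond_wsum_compl mulr_sumr.
rewrite exchange_big /=.
under eq_bigr => T _ do
  (under eq_bigr => B _ do rewrite mulrCA; rewrite -mulr_sumr alt_sum_meets //).
rewrite (bigD1 S) //= big1 ?addr0 ?subxx ?mulr1 // => T /andP[TS T_neqS].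
suff -> : (S \subset T) = false by rewrite mulr0.
by apply/negP => ST; move: T_neqS; rewrite eqEsubset TS ST.
Qed.

Lemma mutinf_supersets (h : {set V} -> R) (S : {set V}) : S != set0 ->
  mutinf h S (~: S) = \sum_(Z : {set V} | ~: S \subset Z) - (-1) ^+ #|Z :&: S| * h Z.
Proof.
move=> S_neq0; rewrite /mutinf /hcond sum_nonempty_subsets; last first.
  by rewrite set0U subrr mulr0.
under eq_bigr => B _ do rewrite mulrBr.
rewrite sumrB -mulr_suml.
under [X in _ - X * _]eq_bigr => B _ do rewrite exprS mulN1r.
rewrite sumrN alt_sum_powerset (negbTE S_neq0) oppr0 mul0r subr0.
have := sum_supersets_compl S predT (fun Z => - (-1) ^+ #|Z :&: S| * h Z).
rewrite (eq_bigl (fun Z : {set V} => ~: S \subset Z)); last by move=> Z; rewrite andbT.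
move=> ->; apply: eq_big => [Y|Y]; first by rewrite powersetE andbT.
rewrite powersetE => YS.
by rewrite setIUl (setIC (~: S)) setICr setU0 (setIidPl YS) exprS mulN1r.
Qed.

Lemma wsum_mutinf (h : {set V} -> R) A :
  h set0 = 0 -> wsum (fun S => mutinf h S (~: S)) A = h A.
Proof.
move=> h0; rewrite /wsum.
rewrite (eq_bigr (fun S => \sum_(Z : {set V} | ~: S \subset Z) - (-1) ^+ #|Z :&: S| * h Z));
  last first.
  move=> S SA; apply: mutinf_supersets; apply: contraTneq SA => ->; by rewrite meetsC meets0.
rewrite (exchange_big_dep predT) //=.
under eq_bigr => Z _ do rewrite -mulr_suml alt_sum_cosupersets mulrBl.
rewrite sumrB (bigD1 A) //= [X in _ - X](bigD1 set0) //= !eqxx !mul1r h0 add0r.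
by rewrite !big1 ?addr0 ?subr0 // => Z /negbTE ->; rewrite mul0r.
Qed.

End MobiusInversion.

Lemma scale_to_nat (I : finType) (w : I -> rat) : (forall i, 0 <= w i) ->
  exists2 D : nat, (0 < D)%N & exists m : I -> nat, forall i, (m i)%:R = w i * D%:R.
Proof.
move=> w_ge0.
pose dn i := `|denq (w i)|%N.
have dn_gt0 i : (0 < dn i)%N by rewrite absz_gt0 denq_neq0.
have numE i : (`|numq (w i)|%N)%:R = w i * (dn i)%:R :> rat.
  rewrite !natr_absz !ger0_norm ?numq_ge0 ?w_ge0 ?ltW ?denq_gt0 //; exact: numqE.
exists (\prod_i dn i)%N; first exact: prodn_gt0.
exists (fun i => `|numq (w i)| * \prod_(j | j != i) dn j)%N => i.
by rewrite /= natrM numE [in RHS](bigD1 i) //= natrM mulrA.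
Qed.

Section Query.
Variables (k : nat) (fds : nat -> seq (seq nat * nat)) (body : seq (nat * seq 'I_k)).
Variable head : seq 'I_k.
Local Notation V := 'I_k.

Definition inducedb (S : {set V}) (y : V) : bool :=
  has (fun ru : nat * seq V => has (fun Wa : seq nat * nat =>
     (onth ru.2 Wa.2 == Some y) && (S == [set x | Some x \in map (onth ru.2) Wa.1]))
     (fds ru.1)) body.

Lemma inducedP S y : reflect (induced fds body S y) (inducedb S y).
Proof.
apply: (iffP hasP) => [[ru ru_body /hasP[Wa Wa_fds /andP[/eqP ey /eqP eS]]]|].
  by exists ru => //; exists Wa.
by move=> [ru ru_body [Wa Wa_fds [ey eS]]]; exists ru => //; apply/hasP; exists Wa;
  rewrite ?ey ?eS ?eqxx.
Qed.

(* A set T of variables is admissible when every induced dependency S -> y with y in T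
   has a premise in T: these are the possible sets of variables carrying one color in
   a valid coloring. *)
Definition admissible (T : {set V}) : bool :=
  [forall S : {set V}, [forall y : V, inducedb S y ==> (y \in T) ==> meets T S]].

Lemma admissibleP (T : {set V}) :
  reflect (forall S y, induced fds body S y -> y \in T -> meets T S) (admissible T).
Proof.
apply: (iffP forallP) => [adm S y /inducedP Sy yT|adm S].
  by move: (adm S) => /forallP /(_ y); rewrite Sy yT.
by apply/forallP => y; apply/implyP => /inducedP Sy; apply/implyP; apply: adm.
Qed.

Lemma not_admissibleP (T : {set V}) :
  ~~ admissible T -> exists S y, [/\ induced fds body S y, y \in T & ~~ meets T S].
Proof.
move=> /forallPn[S /forallPn[y]]; rewrite negb_imply => /andP[/inducedP Sy].
by rewrite negb_imply => /andP[yT TS]; exists S, y.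
Qed.

(* The linear program in the weight coordinates w(S) = I(S | ~: S). *)
Definition weight_feasible (F : realFieldType) (w : {set V} -> F) : Prop :=
  [/\ forall S, 0 <= w S, forall S, ~~ admissible S -> w S = 0 &
      forall ru, ru \in body -> wsum w (vset ru.2) <= 1].

Lemma weight_feasible_ext (F : realFieldType) (w w' : {set V} -> F) :
  w =1 w' -> weight_feasible w -> weight_feasible w'.
Proof.
move=> ww' [w_ge0 w_adm w_atoms]; split => [S|S|ru ru_body]; rewrite -?ww'; auto.
by rewrite -(wsum_ext _ ww'); apply: w_atoms.
Qed.

Lemma weight_feasible_ratr (F : realFieldType) (w : {set V} -> rat) :
  weight_feasible w -> weight_feasible (fun S => ratr (w S) : F).
Proof.
move=> [w_ge0 w_adm w_atoms]; split => [S|S S_adm|ru ru_body].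
- by rewrite ler0q.
- by rewrite w_adm ?rmorph0.
- by rewrite /wsum -rmorph_sum -(rmorph1 (@ratr F)) ler_rat; apply: w_atoms.
Qed.

(* Feasible weights give a feasible set function; in particular h(y | S) for an induced
   dependency S -> y is the weight of sets containing y and avoiding S, none admissible. *)
Lemma feasible_of_weights (F : realFieldType) (w : {set V} -> F) :
  weight_feasible w -> lp_feasible fds body (wsum w).
Proof.
move=> [w_ge0 w_adm w_atoms]; split => //; first exact: wsum0.
- move=> S y Sy; rewrite hcond_wsum big1 // => T /andP[yT TS].
  apply: w_adm; apply: contraNN TS => /admissibleP adm.
  by apply: (adm S y Sy); rewrite -meets1.
- by move=> S S_neq0; rewrite mutinf_wsum // w_ge0.
Qed.

Lemma weights_of_feasible (F : realFieldType) (h : {set V} -> F) :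
  lp_feasible fds body h ->
  weight_feasible (fun S => mutinf h S (~: S)) /\
  forall A, h A = wsum (fun S => mutinf h S (~: S)) A.
Proof.
move=> [h0 h_atoms h_fds h_mutinf].
have hE A : h A = wsum (fun S => mutinf h S (~: S)) A by rewrite wsum_mutinf.
have mutinf_ge0 S : 0 <= mutinf h S (~: S).
  have [->|S_neq0] := eqVneq S set0; last exact: h_mutinf.
  by rewrite /mutinf big_pred0 // => A; rewrite powerset0 inE andbN.
split => //; split => //; last by move=> ru ru_body; rewrite -hE; apply: h_atoms.
move=> T /not_admissibleP[S [y [Sy yT TS]]].
(* h(y | S) = 0 is a sum of nonnegative weights, one of which is the weight of T *)
have := h_fds S y Sy; rewrite /hcond !hE -/(hcond _ _ _) hcond_wsum => sum0.
apply/eqP; rewrite eq_le mutinf_ge0 andbT -sum0 (bigD1 T) /=; last by rewrite meets1 yT.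
by rewrite lerDl sumr_ge0.
Qed.

(* The weight program as a rational linear system: variable x_0 is the objective value
   t and variable x_(i+1) is the weight of the i-th subset of [k]. *)
Local Notation sets := (enum {set V}).
Definition nsets : nat := size sets.

Definition weights_of (F : realFieldType) (x : nat -> F) : {set V} -> F :=
  fun S => x (index S sets).+1.
Definition vars_of (F : realFieldType) (t : F) (w : {set V} -> F) : nat -> F :=
  fun i => if i is j.+1 then w (nth set0 sets j) else t.

Lemma weights_of_vars (F : realFieldType) (t : F) w : weights_of (vars_of t w) =1 w.
Proof. by move=> S; rewrite /weights_of /vars_of nth_index ?mem_enum. Qed.

Definition lin_constr (ct : rat) (g : {set V} -> rat) (b : rat) : constr :=
  (ct :: [seq g T | T <- sets], b).

Lemma lhs_lin_constr (F : realFieldType) ct g b (x : nat -> F) :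
  lhs nsets.+1 (lin_constr ct g b) x =
  ratr ct * x 0%N + \sum_(T : {set V}) ratr (g T) * weights_of x T.
Proof.
rewrite /lhs big_ord_recl /=; congr (_ + _).
rewrite -[RHS]big_enum (big_nth set0) big_mkord; apply: eq_bigr => i _.
by rewrite /bump /= add1n (nth_map set0) /weights_of add0n ?index_uniq // enum_uniq.
Qed.

Lemma sum_indicator (F : realFieldType) (w : {set V} -> F) S (a : rat) :
  \sum_(T : {set V}) ratr (if T == S then a else 0) * w T = ratr a * w S.
Proof.
by rewrite (bigD1 S) //= eqxx big1 ?addr0 // => T /negbTE ->; rewrite rmorph0 mul0r.
Qed.

Lemma sum_meets (F : realFieldType) (w : {set V} -> F) A :
  \sum_(T : {set V}) ratr ((meets T A)%:R) * w T = wsum w A.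
Proof.
rewrite /wsum [RHS]big_mkcond /=; apply: eq_bigr => T _.
by case: (meets T A); rewrite ?ratr_nat ?mul1r ?rmorph0 ?mul0r.
Qed.

Definition nonneg_constr (A : {set V}) : constr :=
  lin_constr 0 (fun T => if T == A then -1 else 0) 0.
Definition vanish_constr (A : {set V}) : constr :=
  lin_constr 0 (fun T => if T == A then 1 else 0) 0.
Definition atom_constr (ru : nat * seq V) : constr :=
  lin_constr 0 (fun T => (meets T (vset ru.2))%:R) 1.
Definition objective_constr : constr :=
  lin_constr 1 (fun T => - (meets T (vset head))%:R) 0.

Definition weight_system : seq constr :=
  [seq nonneg_constr A | A <- sets] ++
  [seq vanish_constr A | A <- sets & ~~ admissible A] ++
  [seq atom_constr ru | ru <- body] ++ [:: objective_constr].

Lemma weight_systemP (F : realFieldType) (x : nat -> F) :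
  all (sat nsets.+1 x) weight_system <->
  weight_feasible (weights_of x) /\ x 0%N <= wsum (weights_of x) (vset head).
Proof.
set w := weights_of x.
have sat_nonneg A : sat nsets.+1 x (nonneg_constr A) = (0 <= w A).
  rewrite /sat lhs_lin_constr sum_indicator rmorph0 mul0r add0r rmorphN rmorph1.
  by rewrite mulN1r oppr_le0.
have sat_vanish A : sat nsets.+1 x (vanish_constr A) = (w A <= 0).
  by rewrite /sat lhs_lin_constr sum_indicator rmorph0 mul0r add0r rmorph1 mul1r.
have sat_atom ru : sat nsets.+1 x (atom_constr ru) = (wsum w (vset ru.2) <= 1).
  by rewrite /sat lhs_lin_constr sum_meets rmorph0 mul0r add0r rmorph1.
have sat_obj : sat nsets.+1 x objective_constr = (x 0%N <= wsum w (vset head)).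
  rewrite /sat lhs_lin_constr -sum_meets rmorph0 rmorph1 mul1r.
  by under eq_bigr => T _ do rewrite rmorphN mulNr; rewrite sumrN subr_le0.
rewrite /weight_system !all_cat /= sat_obj andbT.
split.
- move=> /and4P[/allP w_ge0 /allP w_adm /allP w_atoms obj]; split => //; split.
  + by move=> S; rewrite -sat_nonneg; apply: w_ge0; apply: map_f; rewrite mem_enum.
  + move=> S S_adm; apply/eqP; rewrite eq_le -sat_vanish -sat_nonneg.
    apply/andP; split; [apply: w_adm|apply: w_ge0]; apply: map_f;
      by [rewrite mem_filter S_adm mem_enum|rewrite mem_enum].
  + by move=> ru ru_body; rewrite -sat_atom; apply: w_atoms; apply: map_f.
- move=> [[w_ge0 w_adm w_atoms] obj]; rewrite obj andbT; apply/and3P; split.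
  + by apply/allP => c /mapP[S _ ->]; rewrite sat_nonneg.
  + apply/allP => c /mapP[S]; rewrite mem_filter => /andP[S_adm _] ->.
    by rewrite sat_vanish w_adm.
  + by apply/allP => c /mapP[ru ru_body ->]; rewrite sat_atom w_atoms.
Qed.

Lemma projected_systemP (F : realFieldType) (t : F) :
  all (sat 1 (fun _ => t)) (fm_proj nsets 1 weight_system) <->
  exists2 w, weight_feasible w & t <= wsum w (vset head).
Proof.
split.
- move=> /fm_projP [x [x0 /weight_systemP [w_feas obj]]].
  by exists (weights_of x); rewrite // -(x0 0%N).
- move=> [w w_feas obj]; apply/fm_projP; exists (vars_of t w); split; first by case.
  apply/weight_systemP; rewrite (wsum_ext _ (weights_of_vars t w)); split => //.
  exact: weight_feasible_ext (fun S => esym (weights_of_vars t w S)) w_feas.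
Qed.

Lemma zero_weights_feasible (F : realFieldType) : weight_feasible (fun _ => 0 : F).
Proof. by split => // ru _; rewrite /wsum big1 ?ler01. Qed.

Lemma weight_le_wsum (F : realFieldType) (w : {set V} -> F) T A :
  (forall S, 0 <= w S) -> meets T A -> w T <= wsum w A.
Proof. by move=> w_ge0 TA; rewrite /wsum (bigD1 T) //= lerDl sumr_ge0. Qed.

(* Every head variable occurs in some atom: this bounds the weight program. *)
Hypothesis head_covered : forall x, x \in head -> has (fun ru => x \in ru.2) body.

(* Every set meeting the head meets an atom, so has weight at most 1. *)
Lemma wsum_head_le (F : realFieldType) (w : {set V} -> F) :
  weight_feasible w -> wsum w (vset head) <= nsets%:R.
Proof.
move=> [w_ge0 _ w_atoms].
apply: (@le_trans _ _ (\sum_(T : {set V} | meets T (vset head)) 1)).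
  apply: ler_sum => T /meetsP[x xT]; rewrite inE => /head_covered /hasP[ru ru_body xu].
  apply: le_trans (w_atoms ru ru_body); apply: weight_le_wsum => //.
  by apply/meetsP; exists x; rewrite ?inE.
rewrite big_mkcond /= /nsets -cardE -sumr_const; apply: ler_sum => T _.
by case: (meets T _); rewrite ?lexx ?ler01.
Qed.

Lemma weight_lp_optimum : exists c : rat,
  [/\ 0 <= c, exists2 w : {set V} -> rat, weight_feasible w & wsum w (vset head) = c &
      forall (F : realFieldType) (w : {set V} -> F),
        weight_feasible w -> wsum w (vset head) <= ratr c].
Proof.
have [|||c [c_ge0 sat_c c_max]] := @fm_max1 (fm_proj nsets 1 weight_system) nsets.+1%:R.
- apply/projected_systemP; exists (fun _ => 0); first exact: zero_weights_feasible.
  by rewrite /wsum big1.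
- exact: ler0n.
- apply/negP => /projected_systemP[w w_feas obj].
  by have := le_trans obj (wsum_head_le w_feas); rewrite ler_nat ltnn.
exists c; split => //; last first.
  by move=> F w w_feas; apply: c_max; apply/projected_systemP; exists w.
have [w w_feas obj] := (projected_systemP c).1 sat_c.
exists w => //; apply/le_anti; rewrite obj andbT -[c in _ <= c]ratr_id.
by apply: c_max; apply/projected_systemP; exists w.
Qed.

Definition pattern (n : nat) (L : V -> {set 'I_n}) (g : 'I_n) : {set V} := [set x | g \in L x].

Lemma mem_colors_of n (L : V -> {set 'I_n}) u g :
  (g \in colors_of L u) = meets (pattern L g) (vset u).
Proof.
rewrite /colors_of bigcup_seq.
apply/bigcupP/meetsP => [[x xu gLx]|[x]]; first by exists x; rewrite inE.
by rewrite !inE => gLx xu; exists x.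
Qed.

Lemma card_colors_of n (L : V -> {set 'I_n}) u :
  #|colors_of L u| = (\sum_(T : {set V} | meets T (vset u)) #|[set g | pattern L g == T]|)%N.
Proof.
rewrite -sum1_card (partition_big (pattern L) (fun T => meets T (vset u))); last first.
  by move=> g; rewrite mem_colors_of.
apply: eq_bigr => T Tu; rewrite -sum1_card; apply: eq_bigl => g.
by rewrite inE mem_colors_of; case: eqP => [->|]; rewrite ?Tu ?andbF.
Qed.

Lemma pattern_admissible n (L : V -> {set 'I_n}) g :
  valid_coloring fds body L -> admissible (pattern L g).
Proof.
move=> L_valid; apply/admissibleP => S y Sy; rewrite inE => gLy.
have /bigcupP[x xS gLx] := subsetP (L_valid S y Sy) g gLy.
by apply/meetsP; exists x; rewrite ?inE.
Qed.

Definition color_weights (F : realFieldType) n (L : V -> {set 'I_n}) (T : {set V}) : F :=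
  #|[set g | pattern L g == T]|%:R / (col_den L body)%:R.

Lemma wsum_color_weights (F : realFieldType) n (L : V -> {set 'I_n}) u :
  wsum (color_weights F L) (vset u) = #|colors_of L u|%:R / (col_den L body)%:R.
Proof. by rewrite /wsum -mulr_suml card_colors_of natr_sum. Qed.

Lemma color_weights_feasible (F : realFieldType) n (L : V -> {set 'I_n}) :
  valid_coloring fds body L -> (0 < col_den L body)%N -> weight_feasible (color_weights F L).
Proof.
move=> L_valid den_gt0; split.
- by move=> T; rewrite divr_ge0 ?ler0n.
- move=> T T_adm; rewrite /color_weights (_ : #|_| = 0%N) ?mul0r //.
  apply: eq_card0 => g; rewrite !inE; apply: contraNF T_adm => /eqP <-.
  exact: pattern_admissible.
- move=> ru ru_body; rewrite wsum_color_weights ler_pdivrMr ?ltr0n // mul1r ler_nat.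
  exact: leq_bigmax_seq.
Qed.

Lemma color_ratio_le (F : realFieldType) (c : F) n (L : V -> {set 'I_n}) :
  (forall w : {set V} -> F, weight_feasible w -> wsum w (vset head) <= c) ->
  valid_coloring fds body L -> (0 < col_den L body)%N -> color_ratio F L head body <= c.
Proof.
move=> c_max L_valid den_gt0; rewrite /color_ratio /col_num -wsum_color_weights.
exact/c_max/color_weights_feasible.
Qed.

(* Conversely, natural multiplicities m give the coloring with m(T) colors of pattern T. *)
Definition mult_colors (m : {set V} -> nat) : finType := {T : {set V} & 'I_(m T)}.

Definition mult_coloring (m : {set V} -> nat) : V -> {set 'I_#|mult_colors m|} :=
  fun x => [set g | x \in tag (enum_val g : mult_colors m)].

Lemma card_pattern_mult m T : #|[set g | pattern (mult_coloring m) g == T]| = m T.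
Proof.
have -> : [set g | pattern (mult_coloring m) g == T] =
          enum_rank @: [set p : mult_colors m | tag p == T].
  rewrite (can2_imset_pre _ enum_rankK enum_valK); apply/setP => g; rewrite !inE.
  by congr (_ == _); apply/setP => x; rewrite !inE.
rewrite card_imset; last exact: enum_rank_inj.
have -> : [set p : mult_colors m | tag p == T] =
          (fun j : 'I_(m T) => Tagged (fun T => 'I_(m T)) j) @: [set: 'I_(m T)].
  apply/setP => p; apply/idP/imsetP.
  - by case: p => T' j /=; rewrite inE /= => /eqP eT; subst T'; exists j; rewrite ?in_setT.
  - by move=> [j _ ->]; rewrite inE.
rewrite card_imset ?cardsT ?card_ord // => j1 j2 eq_j.
by have := f_equal (tagged_as (Tagged (fun T => 'I_(m T)) j1)) eq_j; rewrite !tagged_asE.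
Qed.

Lemma card_colors_mult m u :
  #|colors_of (mult_coloring m) u| = (\sum_(T : {set V} | meets T (vset u)) m T)%N.
Proof. by rewrite card_colors_of; apply: eq_bigr => T _; rewrite card_pattern_mult. Qed.

Lemma mult_coloring_valid m :
  (forall T, (0 < m T)%N -> admissible T) -> valid_coloring fds body (mult_coloring m).
Proof.
move=> m_adm S y Sy; apply/subsetP => g; rewrite inE => yT.
have m_gt0 : (0 < m (tag (enum_val g : mult_colors m)))%N.
  exact: leq_ltn_trans (leq0n _) (ltn_ord (tagged (enum_val g : mult_colors m))).
have /meetsP[x xT xS] := admissibleP _ (m_adm _ m_gt0) S y Sy yT.
by apply/bigcupP; exists x; rewrite ?inE.
Qed.

Lemma col_den_gt0 n (L : V -> {set 'I_n}) :
  colors_of L head != set0 -> (0 < col_den L body)%N.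
Proof.
move=> /set0Pn[g]; rewrite mem_colors_of => /meetsP[x xg].
rewrite inE => /head_covered /hasP[ru ru_body xu].
apply: (@leq_trans #|colors_of L ru.2|); last exact: leq_bigmax_seq.
by apply/card_gt0P; exists g; rewrite mem_colors_of; apply/meetsP; exists x; rewrite // inE.
Qed.

(* Lower bound: a rational feasible point with positive objective is achieved, up to
   the factor col_den / D <= 1, by the coloring with multiplicities w * D. *)
Lemma coloring_of_weights (F : realFieldType) (w : {set V} -> rat) :
  weight_feasible w -> 0 < wsum w (vset head) ->
  exists n (L : V -> {set 'I_n}), [/\ valid_coloring fds body L,
    (0 < col_den L body)%N & ratr (wsum w (vset head)) <= color_ratio F L head body].
Proof.
move=> [w_ge0 w_adm w_atoms] obj_gt0.
have [D D_gt0 [m mE]] := scale_to_nat w_ge0.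
pose L := mult_coloring m.
have countE u : (#|colors_of L u|%:R : rat) = wsum w (vset u) * D%:R.
  by rewrite card_colors_mult natr_sum /wsum mulr_suml; apply: eq_bigr => T _; rewrite mE.
have L_valid : valid_coloring fds body L.
  apply: mult_coloring_valid => T m_gt0; apply: contraTT m_gt0 => /w_adm wT0.
  by rewrite -eqn0Ngt -(eqr_nat rat) mE wT0 mul0r.
have den_le : (col_den L body <= D)%N.
  apply/bigmax_leqP_seq => ru ru_body _; rewrite -(@ler_nat rat) countE.
  by rewrite -[X in _ <= X]mul1r ler_wpM2r ?ler0n ?w_atoms.
have den_gt0 : (0 < col_den L body)%N.
  apply: col_den_gt0; rewrite -card_gt0 -(@ltr_nat rat) countE.
  by rewrite mulr_gt0 ?ltr0n.
exists #|mult_colors m|, L; split => //.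
rewrite /color_ratio /col_num ler_pdivlMr ?ltr0n //.
have -> : (#|colors_of L head|%:R : F) = ratr (wsum w (vset head) * D%:R).
  by rewrite -countE ratr_nat.
rewrite rmorphM /= ratr_nat; apply: ler_wpM2l; last by rewrite ler_nat.
by rewrite ler0q ltW.
Qed.

End Query.

Unset Implicit Arguments.

Theorem theorem4p1 (R : realFieldType) (k : nat) (ar : nat -> nat)
  (fds : nat -> seq (seq nat * nat)) (head : seq 'I_k) (body : seq (nat * seq 'I_k))
  (Hatoms : forall ru, ru \in body -> size ru.2 = ar ru.1)
  (Hfds : forall r Wa, Wa \in fds r -> (all (fun p => p < ar r) Wa.1 && (Wa.2 < ar r))%N)
  (Hvars : forall x : 'I_k, has (fun ru => x \in ru.2) body)
  (Hhead : forall x, x \in head -> has (fun ru => x \in ru.2) body)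
  (Hchase : chased fds body)
  (Hdef : exists n (L : 'I_k -> {set 'I_n}),
            valid_coloring fds body L /\ (0 < col_den L body)%N) :
  exists c : R, is_color_number fds body head c /\ lp_optimum fds body head c.
Proof.
have [c [c_ge0 [w w_feas w_head] c_max]] := weight_lp_optimum fds Hhead.
have ratio_le n (L : 'I_k -> {set 'I_n}) : valid_coloring fds body L ->
    (0 < col_den L body)%N -> color_ratio R L head body <= ratr c.
  exact/color_ratio_le/c_max.
exists (ratr c); split; split => //.
- (* the optimum is attained by a coloring: any one if c = 0, else one built from w *)
  have [c0|c_neq0] := eqVneq c 0.
    have [n [L [L_valid den_gt0]]] := Hdef; exists n, L; split => //.
    by apply/le_anti; rewrite ratio_le // c0 rmorph0 divr_ge0 ?ler0n.
  have [|n [L [L_valid den_gt0 ratio_ge]]] := coloring_of_weights Hhead R w_feas.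
    by rewrite w_head lt_def c_neq0.
  by exists n, L; split => //; apply/le_anti; rewrite ratio_le // -w_head.
-
  exists (wsum (fun S => ratr (w S))).
    exact/feasible_of_weights/weight_feasible_ratr.
  by rewrite /wsum -rmorph_sum -w_head.
- by move=> h /weights_of_feasible[h_feas ->]; apply: c_max.
Qed.
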